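(* Let $q$ be a power of a prime $p \neq 2,3$, let $b,c \in \mathbb F_q$ be such that $g(T) = T^3 + bT^2 + cT + 1$ is irreducible over $\mathbb F_q$, and let $F = y^2 - xz$, $G = x^2 + by^2 + cxy + yz$. Let $H_\pi(r,s) = \mathcal H(M_{rF+G}, M_{sF+G})$. Then: (i) $H_\pi$ is a polynomial of degree at most $2$ in $r$ whose coefficient of $r^2$ is a nonzero constant multiple of $h_0(s) = 3s^4 + 4bs^3 + 6cs^2 + 12 s + 4b - c^2$; (ii) the discriminant of $H_\pi$ with respect to $r$ equals a nonzero constant times $g(s)^2 \, f_\pi(s)$, where $f_\pi(s) = (b^2 - 3c)s^2 + (bc - 9)s + (c^2 - 3b)$; (iii) the coefficients $b^2-3c$ and $bc-9$ are not both zero, and $(bc-9)^2 - 4(b^2-3c)(c^2-3b) \neq 0$ (so $f_\pi$ is not a constant multiple of the square of a linear polynomial).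
   Context: For a quadratic form $K(x,y,z)$ over $\mathbb F_q$, $M_K$ denotes its symmetric $3\times 3$ matrix (so $K(v) = v^T M_K v$). For symmetric $3\times3$ matrices $A,B$, write $\det(tA+B) = \Delta_0 + \Delta_1 t + \Delta_2 t^2 + \Delta_3 t^3$ and set $\mathcal H(A,B) = \Delta_1^2 - 4\Delta_0\Delta_2$. *)

From HB Require Import structures.
From mathcomp Require Import all_boot all_order all_algebra all_field.
Set Implicit Arguments. Unset Strict Implicit. Unset Printing Implicit Defensive.
Import Order.TTheory GRing.Theory Num.Theory.
Local Open Scope ring_scope.

Record qform (R : Type) := QForm {
  kxx : R; kyy : R; kzz : R; kxy : R; kxz : R; kyz : R }.

Definition qf_eval (R : comRingType) (K : qform R) (x y z : R) : R :=
  kxx K * x ^+ 2 + kyy K * y ^+ 2 + kzz K * z ^+ 2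
  + kxy K * x * y + kxz K * x * z + kyz K * y * z.

Definition qf_lin (R : comRingType) (r : R) (K L : qform R) : qform R :=
  QForm (r * kxx K + kxx L) (r * kyy K + kyy L) (r * kzz K + kzz L)
        (r * kxy K + kxy L) (r * kxz K + kxz L) (r * kyz K + kyz L).

Definition qf_map (R S : Type) (f : R -> S) (K : qform R) : qform S :=
  QForm (f (kxx K)) (f (kyy K)) (f (kzz K)) (f (kxy K)) (f (kxz K)) (f (kyz K)).

(* the symmetric matrix M_K with K(v) = v^T M_K v (needs 2 invertible) *)
Definition qmat (R : comUnitRingType) (K : qform R) : 'M[R]_3 :=
  let h := (2%:R : R)^-1 in
  \matrix_(i < 3, j < 3)
    match nat_of_ord i, nat_of_ord j with
    | 0, 0 => kxx K | 1, 1 => kyy K | 2, 2 => kzz K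
    | 0, 1 | 1, 0 => h * kxy K
    | 0, 2 | 2, 0 => h * kxz K
    | _, _ => h * kyz K
    end.

Definition detpencil (R : comRingType) (A B : 'M[R]_3) : {poly R} :=
  \det ('X *: map_mx polyC A + map_mx polyC B).

Definition Hinv (R : comRingType) (A B : 'M[R]_3) : R :=
  let D := detpencil A B in D`_1 ^+ 2 - 4%:R * D`_0 * D`_2.

Definition disc2 (R : comRingType) (P : {poly R}) : R :=
  P`_1 ^+ 2 - 4%:R * P`_0 * P`_2.

Section Paper.
Variables (F : fieldType) (b c : F).

Definition gpoly : {poly F} := 'X^3 + b%:P * 'X^2 + c%:P * 'X + 1.

Definition Fform : qform F := QForm 0 1 0 0 (-1) 0.          (* y^2 - xz *)
Definition Gform : qform F := QForm 1 b 0 c 0 1.             (* x^2+by^2+cxy+yz *)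

(* Bivariate polynomials: outer variable r, inner variable s. *)
Definition lift2 (a : F) : {poly {poly F}} := (a%:P)%:P.
Definition rvar : {poly {poly F}} := 'X.
Definition svar : {poly {poly F}} := ('X)%:P.

Definition Hpi : {poly {poly F}} :=
  Hinv (qmat (qf_lin rvar (qf_map lift2 Fform) (qf_map lift2 Gform)))
       (qmat (qf_lin svar (qf_map lift2 Fform) (qf_map lift2 Gform))).

Definition h0 : {poly F} :=
  3%:R *: 'X^4 + (4%:R * b) *: 'X^3 + (6%:R * c) *: 'X^2 + 12%:R *: 'X
  + (4%:R * b - c ^+ 2)%:P.

Definition fpi : {poly F} :=
  (b ^+ 2 - 3%:R * c) *: 'X^2 + (b * c - 9%:R) *: 'X + (c ^+ 2 - 3%:R * b)%:P.

End Paper.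

From HB Require Import structures.
From mathcomp Require Import all_boot all_order all_algebra all_field.
From mathcomp Require Import ring.
Import Order.TTheory GRing.Theory Num.Theory.
Set Implicit Arguments. Unset Strict Implicit. Unset Printing Implicit Defensive.
Local Open Scope ring_scope.

(* Scaling the pencils by 2 replaces each M_K by the Gram matrix P_K of the
   polar form K(u+v) - K(u) - K(v), which has no halves.  As H is homogeneous
   of degree 6, H_pi is 2^-6 times the invariant of the polar pencils, which
   Sarrus' rule turns into an explicit quadratic in r over F[s]; parts (i) and
   (ii) are then ring identities in F[s].  For (iii), if the discriminant of
   f_pi vanished, the double root of f_pi, -(bc - 9)/(2(b^2 - 3c)) (or -b/3 when
   b^2 = 3c, which then forces bc = 9), would be a root of the irreducible
   cubic g. *)

Lemma irreducible_no_root (R : idomainType) (p : {poly R}) (x : R) :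
  (2 < size p)%N -> irreducible_poly p -> ~~ root p x.
Proof.
move=> size_p irr_p; apply/negP; rewrite -dvdp_XsubCl => /(irredp_XsubCP irr_p).
by case=> /eqp_size; rewrite size_XsubC ?size_poly1 // => size_p2;
  rewrite -size_p2 in size_p.
Qed.

Definition entry3 (R : Type) (A : 'M[R]_3) (i j : nat) : R := A (inord i) (inord j).

Definition sarrus (R : comRingType) (m : nat -> nat -> R) : R :=
  m 0 0 * m 1 1 * m 2 2 + m 0 1 * m 1 2 * m 2 0 + m 0 2 * m 1 0 * m 2 1
  - m 0 2 * m 1 1 * m 2 0 - m 0 1 * m 1 0 * m 2 2 - m 0 0 * m 1 2 * m 2 1.

Lemma det_sarrus (R : comRingType) (A : 'M[R]_3) : \det A = sarrus (entry3 A).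
Proof.
rewrite (expand_det_row _ ord0) !big_ord_recl big_ord0 /cofactor.
rewrite !(expand_det_row _ ord0) !big_ord_recl !big_ord0 /cofactor !det_mx11.
rewrite /sarrus /entry3 !mxE /bump /=.
have E (i j : 'I_3) : A i j = A (inord i) (inord j) by rewrite !inord_val.
rewrite !(E (lift _ _)) !(E ord0) /= !expr0 !expr1 !expr2; ring.
Qed.

Definition colmix (R : Type) (pick : nat -> bool) (m n : nat -> nat -> R) i j : R :=
  if pick j then m i j else n i j.

Section Pencil.
Variables (R : comRingType) (A B : 'M[R]_3).
Local Notation a := (entry3 A).
Local Notation b := (entry3 B).

Definition pencil_coef1 : R :=
  sarrus (colmix (pred1 0%N) a b) + sarrus (colmix (pred1 1%N) a b)
  + sarrus (colmix (pred1 2%N) a b).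
Definition pencil_coef2 : R :=
  sarrus (colmix (predC1 0%N) a b) + sarrus (colmix (predC1 1%N) a b)
  + sarrus (colmix (predC1 2%N) a b).

Lemma detpencilE : detpencil A B =
  (sarrus b)%:P + pencil_coef1%:P * 'X + pencil_coef2%:P * 'X^2 + (sarrus a)%:P * 'X^3.
Proof.
rewrite /detpencil det_sarrus /pencil_coef1 /pencil_coef2 /sarrus /colmix /entry3 !mxE /=.
rewrite !(rmorphD, rmorphB, rmorphM); ring.
Qed.

Lemma HinvE : Hinv A B = pencil_coef1 ^+ 2 - 4%:R * sarrus b * pencil_coef2.
Proof.
rewrite /Hinv detpencilE !coefD !coefCM !coefC !coefXn !coefX /=.
by rewrite !mulr0 !mulr1 !addr0 !add0r.
Qed.

End Pencil.

Lemma HinvZ (R : comRingType) (x : R) (A B : 'M[R]_3) :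
  Hinv (x *: A) (x *: B) = x ^+ 6 * Hinv A B.
Proof.
have D : detpencil (x *: A) (x *: B) = x ^+ 3 *: detpencil A B.
  rewrite /detpencil !map_mxZ scalerA mulrC -scalerA -scalerDr detZ.
  by rewrite -rmorphXn mul_polyC.
rewrite /Hinv D !coefZ; ring.
Qed.

Lemma Poly3E (R : comRingType) (x y z : R) :
  Poly [:: x; y; z] = x%:P + y%:P * 'X + z%:P * 'X^2.
Proof. by rewrite /= !cons_poly_def mul0r add0r; ring. Qed.

Definition polar_mx (R : comRingType) (K : qform R) : 'M[R]_3 :=
  \matrix_(i < 3, j < 3)
    match nat_of_ord i, nat_of_ord j with
    | 0, 0 => 2%:R * kxx K | 1, 1 => 2%:R * kyy K | 2, 2 => 2%:R * kzz K
    | 0, 1 | 1, 0 => kxy K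
    | 0, 2 | 2, 0 => kxz K
    | _, _ => kyz K
    end.

Lemma qmat_polar (R : comUnitRingType) (K : qform R) :
  (2%:R : R) \is a GRing.unit -> qmat K = (2%:R)^-1 *: polar_mx K.
Proof.
move=> unit2; apply/matrixP => i j; rewrite !mxE.
by case: i j => [[|[|[|?]]] ?] [[|[|[|?]]] ?] //=; rewrite mulrA mulVr ?mul1r.
Qed.

Lemma disc2Z (R : comRingType) (x : R) (P : {poly R}) :
  disc2 (x *: P) = x ^+ 2 * disc2 P.
Proof. by rewrite /disc2 !coefZ; ring. Qed.

Section PencilFG.
Variables (F : fieldType) (b c : F).
Local Notation s := ('X : {poly F}).

Definition polarH0 : {poly F} :=
  (-12%:R)%:P - (16%:R * c) *: s - (24%:R * b) *: s ^+ 2 - 48%:R *: s ^+ 3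
  + (4%:R * b ^+ 2 - 16%:R * c) *: s ^+ 4.
Definition polarH1 : {poly F} :=
  (-8%:R * c)%:P + (16%:R * b - 16%:R * c ^+ 2) *: s + (72%:R - 24%:R * b * c) *: s ^+ 2
  + (16%:R * c - 16%:R * b ^+ 2) *: s ^+ 3 - (8%:R * b) *: s ^+ 4.

Definition polarH : {poly {poly F}} := Poly [:: polarH0; polarH1; -4%:R *: h0 b c].

Local Notation pencil t :=
  (qf_lin t (qf_map (@lift2 F) (Fform F)) (qf_map (@lift2 F) (Gform b c))).

Lemma Hinv_polar :
  Hinv (polar_mx (pencil (rvar F))) (polar_mx (pencil (svar F))) = polarH.
Proof.
rewrite HinvE /pencil_coef1 /pencil_coef2 /sarrus /colmix /entry3 !mxE !inordK //=.
rewrite /polarH Poly3E /polarH0 /polarH1 /h0 /lift2 /rvar /svar -!mul_polyC.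
ring.
Qed.

Lemma disc2_polarH : disc2 polarH = 2%:R ^+ 8 *: (gpoly b c ^+ 2 * fpi b c).
Proof.
rewrite /disc2 !coef_Poly /= /polarH0 /polarH1 /h0 /gpoly /fpi -!mul_polyC.
ring.
Qed.

Hypothesis two_neq0 : (2%:R : F) != 0.

Lemma HpiE : Hpi b c = ((2%:R)^-1 ^+ 6)%:P *: polarH.
Proof.
have nat2 : (2%:R : {poly {poly F}}) = ((2%:R)%:P)%:P by rewrite !rmorph_nat.
have unit2 : (2%:R : {poly {poly F}}) \is a GRing.unit.
  by rewrite nat2; do 2 apply: rmorph_unit; rewrite unitfE.
rewrite /Hpi !qmat_polar // HinvZ Hinv_polar -mul_polyC nat2 !polyCV.
by rewrite -!(rmorphXn polyC).
Qed.

Lemma size_Hpi : (size (Hpi b c) <= 3)%N.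
Proof. by rewrite HpiE (leq_trans (size_scale_leq _ _)) ?size_Poly. Qed.

Lemma Hpi_coef2 : (Hpi b c)`_2 = - (2%:R)^-1 ^+ 4 *: h0 b c.
Proof.
rewrite HpiE coefZ coef_Poly /= mul_polyC scalerA; congr (_ *: _).
by field.
Qed.

Lemma disc2_Hpi : disc2 (Hpi b c) = (2%:R)^-1 ^+ 4 *: (gpoly b c ^+ 2 * fpi b c).
Proof.
rewrite HpiE disc2Z disc2_polarH -(rmorphXn polyC) mul_polyC scalerA.
by congr (_ *: _); field.
Qed.
End PencilFG.

Section IrreducibleCubic.
Variables (F : fieldType) (b c : F).

Lemma size_gpoly_gt2 : (2 < size (gpoly b c))%N.
Proof.
rewrite ltnNge; apply/negP => /leq_sizeP/(_ 3 isT)/eqP.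
rewrite /gpoly !coefD !coefCM !coefC !coefXn !coefX /= !mulr0 !addr0.
by rewrite oner_eq0.
Qed.

Hypotheses (two_neq0 : (2%:R : F) != 0) (three_neq0 : (3%:R : F) != 0).
Hypothesis irr_g : irreducible_poly (gpoly b c).

Lemma fpi_disc_neq0 :
  (b * c - 9%:R) ^+ 2 - 4%:R * (b ^+ 2 - 3%:R * c) * (c ^+ 2 - 3%:R * b) != 0.
Proof.
set e := b ^+ 2 - 3%:R * c; set u := b * c - 9%:R.
apply/negP => /eqP disc0.
have natrX_neq0 n k : (n%:R : F) != 0 -> (n ^ k)%:R != 0 :> F.
  by rewrite natrX; apply: expf_neq0.
have root_g x : root (gpoly b c) x -> False.
  by move=> gx; move: (irreducible_no_root x size_gpoly_gt2 irr_g); rewrite gx.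
have [e0 | e_neq0] := eqVneq e 0.
  have u0 : u = 0.
    by move: disc0; rewrite e0 mulr0 mul0r subr0 => /eqP; rewrite sqrf_eq0 => /eqP.
  apply: (root_g (- b / 3%:R)); apply/rootP.
  have -> : (gpoly b c).[- b / 3%:R] = (2%:R * b * e - 3%:R * u) / 3%:R ^+ 3.
    rewrite /gpoly !(hornerD, hornerCM, hornerXn, hornerX, hornerC) /e /u; field.
    by rewrite three_neq0 andbT (natrX_neq0 3 3).
  by rewrite e0 u0 !mulr0 subrr mul0r.
apply: (root_g (- u / (2%:R * e))); apply/rootP.
have -> : (gpoly b c).[- u / (2%:R * e)] =
    (27%:R - 9%:R * b * c + 2%:R * b ^+ 3) * (u ^+ 2 - 4%:R * e * (c ^+ 2 - 3%:R * b))
    / (3%:R * (2%:R * e) ^+ 3).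
  rewrite /gpoly !(hornerD, hornerCM, hornerXn, hornerX, hornerC) /e /u; field.
  by rewrite e_neq0 three_neq0 two_neq0 (natrX_neq0 2 3).
by rewrite disc0 mulr0 mul0r.
Qed.

End IrreducibleCubic.

Theorem mainTheorem6 (F : finFieldType) (p : nat) (b c : F) :
  prime p -> p \in [pchar F] -> p != 2%N -> p != 3%N ->
  irreducible_poly (gpoly b c) ->
  [/\ (size (Hpi b c) <= 3)%N
      /\ (exists2 k : F, k != 0 & (Hpi b c)`_2 = k *: h0 b c),
      (exists2 k : F, k != 0 &
         disc2 (Hpi b c) = k *: (gpoly b c ^+ 2 * fpi b c))
    & ((b ^+ 2 - 3%:R * c != 0) || (b * c - 9%:R != 0))
      /\ (b * c - 9%:R) ^+ 2 - 4%:R * (b ^+ 2 - 3%:R * c) * (c ^+ 2 - 3%:R * b) != 0 ].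
Proof.
move=> p_prime pcharFp p_neq2 p_neq3 irr_g.
have two_neq0 : (2%:R : F) != 0 by rewrite -(dvdn_pcharf pcharFp) dvdn_prime2.
have three_neq0 : (3%:R : F) != 0 by rewrite -(dvdn_pcharf pcharFp) dvdn_prime2.
have k_neq0 : (2%:R : F)^-1 ^+ 4 != 0 by rewrite expf_neq0 ?invr_eq0.
have disc_neq0 := fpi_disc_neq0 two_neq0 three_neq0 irr_g.
split.
- split; first exact: size_Hpi.
  by exists (- (2%:R)^-1 ^+ 4); rewrite ?oppr_eq0 // Hpi_coef2.
- by exists ((2%:R)^-1 ^+ 4); rewrite // disc2_Hpi.
split=> //; rewrite -negb_and; apply: contra disc_neq0 => /andP[/eqP -> /eqP ->].
by rewrite expr0n /= mulr0 mul0r subrr.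
Qed.
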